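(* Let $I$ be an instance of 3-SAT$^*$ with 1-in-3-clauses $C_0,\dots,C_{m-1}$, 2-in-3-clauses $C_m,\dots,C_{2m-1}$ and variables $x_0,\dots,x_{n-1}$, and let $\kappa:[n]\times[4]\to[2m]\times[3]$ be the bijection mapping $(j,t)$ to the (clause index, position in that clause) of the first ($t=0$) or second ($t=1$) positive occurrence of $x_j$, or of the first ($t=2$) or second ($t=3$) negative occurrence of $x_j$. Construct the restricted assignment instance $I'$ as follows. Machines: truth assignment machines $\mathtt{TMach}(j,q)$ for $j\in[n],q\in[2]$, and clause machines $\mathtt{CMach}(i,s)$ for $i\in[2m],s\in[3]$. Jobs: (i) for each $j\in[n]$ a truth assignment job $\mathtt{TJob}(j)$ of size $2$ eligible on $\{\mathtt{TMach}(j,0),\mathtt{TMach}(j,1)\}$; (ii) for each $i\in[2m]$ and $s\in[3]$ a clause job $\mathtt{CJob}(i,s)$ eligible on $\{\mathtt{CMach}(i,s'):s'\in[3]\}$, where $\mathtt{CJob}(i,0)$ has size $1$, $\mathtt{CJob}(i,2)$ has size $2$, and $\mathtt{CJob}(i,1)$ has size $2$ if $C_i$ is a 1-in-3-clause and size $1$ otherwise; (iii) for each $j\in[n]$, $t\in[4]$ a variable job $\mathtt{VJob}(j,t)$ of size $1$ eligible on $\{\mathtt{TMach}(j,\lfloor t/2\rfloor),\mathtt{CMach}(\kappa(j,t))\}$. Then there is a satisfying truth assignment for $I$ if and only if there is a schedule of makespan $2$ for $I'$.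
   Context: Notation: $[k]=\{0,\dots,k-1\}$. A 3-SAT$^*$ instance is a conjunction of clauses each with exactly 3 literals, each clause being either a 1-in-3-clause (satisfied iff exactly one of its literals is true) or a 2-in-3-clause (satisfied iff exactly two of its literals are true); there are equally many 1-in-3- and 2-in-3-clauses, and each literal ($x_j$ and $\neg x_j$ for every variable) occurs exactly twice. Restricted assignment: each job has a size and a set of eligible machines, a schedule assigns each job to an eligible machine, and the makespan is the maximum total size assigned to a machine. *)

From mathcomp Require Import all_boot.
Set Implicit Arguments. Unset Strict Implicit. Unset Printing Implicit Defensive.

(** * 3-SAT* instances
  Variables x_0..x_{n-1} are 'I_n; a literal is a pair (j, b) with b = true
  meaning x_j and b = false meaning (not x_j).  An instance with m 1-in-3 and
  m 2-in-3 clauses is a map cl : 'I_(2*m) -> 'I_3 -> literal; clause i is a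
  1-in-3-clause iff i < m. *)

Definition lit_val (n : nat) (a : 'I_n -> bool) (l : 'I_n * bool) : bool :=
  if l.2 then a l.1 else ~~ a l.1.

Definition sat (n m : nat) (cl : 'I_(2 * m) -> 'I_3 -> 'I_n * bool)
    (a : 'I_n -> bool) : Prop :=
  forall i : 'I_(2 * m),
    #|[set s : 'I_3 | lit_val a (cl i s)]| = (if i < m then 1 else 2).

Definition pos_lt (m : nat) (p q : 'I_(2 * m) * 'I_3) : bool :=
  (p.1 < q.1) || ((p.1 == q.1) && (p.2 < q.2)).

Definition load (J M : finType) (size : J -> nat) (sigma : J -> M) (x : M) : nat :=
  \sum_(j : J | sigma j == x) size j.

Definition makespan (J M : finType) (size : J -> nat) (sigma : J -> M) : nat :=
  \max_(x : M) load size sigma x.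

Definition valid_schedule (J M : finType) (elig : J -> {set M}) (sigma : J -> M) : Prop :=
  forall j, sigma j \in elig j.

Definition Mach (n m : nat) : finType := (('I_n * 'I_2) + ('I_(2 * m) * 'I_3))%type.
(* jobs: TJob(j) = inl j, CJob(i,s) = inr (inl (i,s)), VJob(j,t) = inr (inr (j,t)) *)
Definition Job (n m : nat) : finType :=
  ('I_n + (('I_(2 * m) * 'I_3) + ('I_n * 'I_4)))%type.

Definition TMach (n m : nat) (j : 'I_n) (q : 'I_2) : Mach n m := inl (j, q).
Definition CMach (n m : nat) (i : 'I_(2 * m)) (s : 'I_3) : Mach n m := inr (i, s).

Definition job_size (n m : nat) (jb : Job n m) : nat :=
  match jb with
  | inl _ => 2
  | inr (inl (i, s)) =>
      if val s == 0 then 1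
      else if val s == 1 then (if val i < m then 2 else 1)
      else 2
  | inr (inr _) => 1
  end.

Definition job_elig (n m : nat) (kappa : 'I_n * 'I_4 -> 'I_(2 * m) * 'I_3)
    (jb : Job n m) : {set Mach n m} :=
  match jb with
  | inl j => [set TMach m j (inord 0); TMach m j (inord 1)]
  | inr (inl (i, s)) => [set CMach n i s' | s' : 'I_3]
  | inr (inr (j, t)) =>
      [set TMach m j (inord (val t %/ 2)); CMach n (kappa (j, t)).1 (kappa (j, t)).2]
  end.

From mathcomp Require Import all_boot perm zify.
Set Implicit Arguments. Unset Strict Implicit. Unset Printing Implicit Defensive.

(* From a satisfying assignment: TJob(j) goes to TMach(j, ~~ x_j), the
   variable jobs of true literals to their clause machines and those of false
   literals to the other truth machine.  In a 1-in-3-clause the clause job of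
   size 1 joins the variable job of the true literal and the two of size 2
   take the other machines; in a 2-in-3-clause the clause job of size 2 takes
   the machine of the false literal.

   Conversely, set x_j iff TJob(j) is on TMach(j, 0).  The variable job of a
   true literal cannot share its truth machine with TJob(j), so it sits on its
   clause machine.  The three machines of a clause have capacity 6 and its
   clause jobs have total size 5 resp. 4, so a 1-in-3-clause has at most one
   and a 2-in-3-clause at most two true literals.  Every variable has exactly
   two true occurrences, 2n = 3m in all, which is the sum of these bounds; so
   every bound is attained. *)

Lemma big_set2 (R : Type) (idx : R) (op : Monoid.com_law idx) (I : finType)
    (a b : I) (F : I -> R) :
  a != b -> \big[op/idx]_(i in [set a; b]) F i = op (F a) (F b).
Proof. by move=> ab; rewrite big_setU1 ?big_set1 // in_set1. Qed.

Lemma card_pairs (I K : finType) (P : I -> K -> bool) :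
  #|[set p : I * K | P p.1 p.2]| = \sum_i #|[set k | P i k]|.
Proof.
rewrite -sum1_card (eq_bigl (fun p => xpredT p.1 && P p.1 p.2)) => [|p]; last first.
  by rewrite in_set.
rewrite -(pair_big_dep xpredT P (fun _ _ => 1)); apply: eq_bigr => i _.
by rewrite -sum1_card; apply: eq_bigl => k; rewrite in_set.
Qed.

Section Schedules.
Variables (J M : finType) (size : J -> nat) (sigma : J -> M).

Lemma sum_load (A : {pred M}) :
  \sum_(x in A) load size sigma x = \sum_(jb | sigma jb \in A) size jb.
Proof.
rewrite (partition_big sigma (mem A)) //; apply: eq_bigr => x Ax.
by apply: eq_bigl => jb; case: eqP => [->|]; rewrite ?Ax ?andbF.
Qed.

Lemma load_le_sum (S : {pred J}) x :
  (forall jb, sigma jb = x -> jb \in S) -> load size sigma x <= \sum_(jb in S) size jb.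
Proof.
move=> sub; apply: (sub_le_big leqnn (fun u v => leq_addr v u)) => jb.
by move/eqP/sub.
Qed.

Lemma sum_size_le_makespan (S : {pred J}) (A : {pred M}) :
  {in S, forall jb, sigma jb \in A} ->
  \sum_(jb in S) size jb <= #|A| * makespan size sigma.
Proof.
move=> SA; apply: leq_trans (_ : \sum_(x in A) load size sigma x <= _).
  rewrite sum_load; apply: (sub_le_big leqnn (fun u v => leq_addr v u)).
  exact: SA.
rewrite -sum1_card big_distrl /=; apply: leq_sum => x _.
by rewrite mul1n; apply: leq_bigmax.
Qed.

Lemma size_pair_le_makespan a b :
  sigma a = sigma b -> a != b -> size a + size b <= makespan size sigma.
Proof.
move=> sab ab; rewrite -big_set2 // -[makespan _ _]mul1n -(cards1 (sigma a)).
by apply: sum_size_le_makespan => jb /set2P [] ->; rewrite ?sab in_set1.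
Qed.

End Schedules.

Lemma lit_valE n (a : 'I_n -> bool) (l : 'I_n * bool) : lit_val a l = (l.2 == a l.1).
Proof. by case: l => j []; rewrite /lit_val /=; case: (a j). Qed.

Lemma half_ord4 (t : 'I_4) : t %/ 2 = ~~ (t < 2).
Proof. by case: t => [[|[|[|[|]]]]]. Qed.

Lemma inord_bool_inj : injective (fun b : bool => inord b : 'I_2).
Proof.
by move=> b c /(congr1 val) /=; rewrite !inordK ?ltnS ?leq_b1 // => /eqP; case: b; case: c.
Qed.

Lemma sum_clause_bound m : \sum_(i < 2 * m) (if i < m then 1 else 2) = 3 * m.
Proof.
rewrite -(big_mkord xpredT (fun i => if i < m then 1 else 2)).
rewrite (big_cat_nat _ (n := m)) //=; last lia.
rewrite (eq_big_nat _ _ (F2 := fun _ => 1)); last by move=> i /andP [_ ->].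
rewrite [X in _ + X](eq_big_nat _ _ (F2 := fun _ => 2)); last first.
  by move=> i /andP [m_le_i _]; rewrite ltnNge m_le_i.
rewrite !sum_nat_const_nat; lia.
Qed.

Section Reduction.
Variables (n m : nat) (cl : 'I_(2 * m) -> 'I_3 -> 'I_n * bool).
Variable kappa : 'I_n * 'I_4 -> 'I_(2 * m) * 'I_3.
Hypothesis kappa_bij : bijective kappa.
Hypothesis cl_kappa : forall j t, cl (kappa (j, t)).1 (kappa (j, t)).2 = (j, val t < 2).

Local Notation TJob j := (inl j : Job n m).
Local Notation CJob i s := (inr (inl (i, s)) : Job n m).
Local Notation VJob j t := (inr (inr (j, t)) : Job n m).
Local Notation size := (@job_size n m).

Lemma vars_clauses_balance : 2 * n = 3 * m.
Proof. by have := bij_eq_card kappa_bij; rewrite !card_prod !card_ord; lia. Qed.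

Lemma cl_kappaE q : cl (kappa q).1 (kappa q).2 = (q.1, val q.2 < 2).
Proof. by case: q; apply: cl_kappa. Qed.

Lemma card_var_lits_eq (a : 'I_n -> bool) j (b : bool) :
  #|[set t : 'I_4 | lit_val a (j, val t < 2) == b]| = 2.
Proof.
rewrite -sum1_card big_mkcond !big_ord_recr big_ord0 !in_set /= /lit_val /=.
by case: (a j); case: b.
Qed.

Lemma sum_card_true_lits (a : 'I_n -> bool) :
  \sum_i #|[set s | lit_val a (cl i s)]| = 2 * n.
Proof.
transitivity #|[set q : 'I_n * 'I_4 | lit_val a (q.1, val q.2 < 2)]|.
  rewrite -card_pairs -!sum1_card (reindex kappa) /=; last exact: onW_bij.
  by apply: eq_bigl => q; rewrite !in_set cl_kappaE.
rewrite (card_pairs (fun j (t : 'I_4) => lit_val a (j, val t < 2))).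
rewrite (eq_bigr (fun _ => 2)) => [|j _]; first by rewrite sum_nat_const card_ord mulnC.
apply: etrans (card_var_lits_eq a j true); apply: eq_card => t.
by rewrite !in_set eqb_id.
Qed.

Definition assignment_of_schedule (sigma : Job n m -> Mach n m) (j : 'I_n) : bool :=
  sigma (TJob j) == TMach m j (inord 0).

Section FromSchedule.
Variable sigma : Job n m -> Mach n m.
Hypothesis sigma_valid : valid_schedule (job_elig kappa) sigma.
Hypothesis sigma_makespan : makespan size sigma <= 2.
Local Notation a := (assignment_of_schedule sigma).

Lemma tjob_machine j : sigma (TJob j) = TMach m j (inord (~~ a j)).
Proof.
rewrite /assignment_of_schedule; have := sigma_valid (TJob j).
by case/set2P=> ->; rewrite ?eqxx //; case: eqP => // -[] /(@inord_bool_inj true false).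
Qed.

Lemma true_vjob_on_clause q :
  lit_val a (q.1, val q.2 < 2) ->
  sigma (inr (inr q)) = CMach n (kappa q).1 (kappa q).2.
Proof.
case: q => j t /= true_lit.
case/set2P: (sigma_valid (VJob j t)) => // on_tmach; exfalso.
have same_machine : sigma (TJob j) = sigma (VJob j t).
  by move: true_lit; rewrite on_tmach tjob_machine half_ord4 lit_valE => /eqP /= ->.
have := size_pair_le_makespan size (sigma := sigma) same_machine isT.
by move/leq_trans/(_ sigma_makespan).
Qed.

Lemma card_true_lits_le i :
  #|[set s | lit_val a (cl i s)]| <= (if i < m then 1 else 2).
Proof.
case: kappa_bij => g _ gK.
pose f (x : 'I_3 + 'I_3) : Job n m :=
  match x with inl s => CJob i s | inr s => inr (inr (g (i, s))) end.
pose P := [pred x : 'I_3 + 'I_3 | if x is inr s then lit_val a (cl i s) else true].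
have f_inj : injective f.
  by move=> [s|s] [s'|s'] // [] => [->|/(can_inj gK) [->]].
have placed :
    {in [set f x | x in P], forall jb, sigma jb \in [set CMach n i s | s : 'I_3]}.
  move=> _ /imsetP [[s|s] Ps ->]; first exact: sigma_valid (CJob i s).
  move: Ps; have := cl_kappaE (g (i, s)); rewrite gK inE.
  by move=> -> /true_vjob_on_clause ->; rewrite gK imset_f.
have capacity : #|[set CMach n i s | s : 'I_3]| * makespan size sigma <= 3 * 2.
  by apply: leq_mul sigma_makespan; rewrite (leq_trans (leq_imset_card _ _)) ?card_ord.
have := leq_trans (sum_size_le_makespan size placed) capacity.
rewrite big_imset /=; last by move=> x y _ _ /f_inj.
rewrite big_sumType /= !big_ord_recr big_ord0 /=.
rewrite (eq_bigl (fun s => s \in [set s | lit_val a (cl i s)])) => [|s]; last first.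
  by rewrite in_set.
rewrite sum1_card; set T := #|[set s | lit_val a (cl i s)]|.
by case: ifP; lia.
Qed.

Lemma sat_of_schedule : sat cl a.
Proof.
have := leqif_sum (P := xpredT) (fun i _ => leqif_eq (card_true_lits_le i)).
rewrite sum_card_true_lits sum_clause_bound vars_clauses_balance.
by case=> _; rewrite eqxx => /esym/forall_inP tight i; apply/eqP/tight.
Qed.

End FromSchedule.

Section FromAssignment.
Variable a : 'I_n -> bool.
Hypothesis a_sat : sat cl a.

Definition odd_lit i : 'I_3 := odflt ord0 [pick s | lit_val a (cl i s) == (i < m)].

Lemma odd_litP i s : (lit_val a (cl i s) == (i < m)) = (s == odd_lit i).
Proof.
have card_odd : #|[set s | lit_val a (cl i s) == (i < m)]| = 1.
  have := a_sat i; case: (i < m) => card_true.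
    by rewrite -[RHS]card_true; apply: eq_card => s'; rewrite !in_set eqb_id.
  have := cardsC [set s | lit_val a (cl i s)]; rewrite card_true card_ord.
  have -> : ~: [set s | lit_val a (cl i s)] = [set s | lit_val a (cl i s) == false].
    by apply/setP => s'; rewrite !in_set eqbF_neg.
  lia.
have [r odd_r] := cards1P (introT eqP card_odd).
have odd_memE s' : (lit_val a (cl i s') == (i < m)) = (s' == r).
  by move/setP/(_ s'): odd_r; rewrite in_set in_set1.
rewrite /odd_lit odd_memE; case: pickP => [r' | none].
  by rewrite odd_memE => /eqP ->.
by have := none r; rewrite odd_memE eqxx.
Qed.

Definition pivot i : 'I_3 := if i < m then ord0 else ord_max.

Lemma clause_machine_fit (i : 'I_(2 * m)) (u : 'I_3) :
  size (CJob i (tperm (pivot i) (odd_lit i) u)) + lit_val a (cl i u) <= 2.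
Proof.
have := odd_litP i u.
have [-> | u_even] := eqVneq u (odd_lit i).
  by rewrite tpermR => /eqP ->; rewrite /pivot; case: ifP.
have : tperm (pivot i) (odd_lit i) u != pivot i.
  by rewrite -[X in _ != X](tpermR (pivot i) (odd_lit i)) (inj_eq perm_inj).
rewrite /pivot /=.
by move: (tperm _ _ u) (lit_val a (cl i u)) => [[|[|[|s]]] ? ] [] //; case: (i < m).
Qed.

Definition schedule_of_assignment (jb : Job n m) : Mach n m :=
  match jb with
  | inl j => TMach m j (inord (~~ a j))
  | inr (inl (i, s)) => CMach n i (tperm (pivot i) (odd_lit i) s)
  | inr (inr (j, t)) =>
      if lit_val a (j, val t < 2) then CMach n (kappa (j, t)).1 (kappa (j, t)).2
      else TMach m j (inord (val t %/ 2))
  end.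

Local Notation sigma := schedule_of_assignment.

Lemma schedule_of_assignment_valid : valid_schedule (job_elig kappa) sigma.
Proof.
case=> [j | [[i s] | [j t]]] /=.
- by case: (a j); rewrite in_set2 eqxx ?orbT.
- exact: imset_f.
- by case: ifP; rewrite in_set2 eqxx ?orbT.
Qed.

Lemma load_tmach_le j q : load size sigma (TMach m j q) <= 2.
Proof.
have [-> | q_free] := eqVneq q (inord (~~ a j)).
  apply: leq_trans (@load_le_sum _ _ size sigma (pred1 (TJob j)) _ _) _; last first.
    by rewrite big_pred1_eq.
  case=> [j' | [[i s] | [j' t]]] //=; first by case=> ->; rewrite inE.
  case: ifP => // false_lit [<-]; rewrite half_ord4 => /inord_bool_inj/negb_inj.
  by move: false_lit; rewrite lit_valE => /negbT/eqP.
pose S := [set VJob j t | t in [set t : 'I_4 | lit_val a (j, val t < 2) == false]].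
apply: leq_trans (@load_le_sum _ _ size sigma S _ _) _.
  case=> [j' | [[i s] | [j' t]]] //=.
    by case=> -> q_tjob; rewrite q_tjob eqxx in q_free.
  case: ifP => // false_lit [eq_j _]; subst j'.
  by rewrite imset_f // in_set false_lit.
rewrite big_imset /=; last by move=> t t' _ _ [].
by rewrite sum1_card card_var_lits_eq.
Qed.

Lemma load_cmach_le i u : load size sigma (CMach n i u) <= 2.
Proof.
case: kappa_bij => g kappaK gK.
set c := CJob i (tperm (pivot i) (odd_lit i) u).
have jobs_at jb : sigma jb = CMach n i u ->
    jb = c \/ lit_val a (cl i u) /\ jb = inr (inr (g (i, u))).
  case: jb => [j | [[i' s] | [j t]]] //=.
    by case=> -> eq_u; left; rewrite /c -eq_u tpermK.
  case: ifP => // true_lit [eq_i eq_u]; right.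
  by rewrite -eq_i -eq_u cl_kappa -surjective_pairing kappaK.
have := clause_machine_fit i u; case: (boolP (lit_val a (cl i u))) => u_lit fit.
  pose S := [set c; inr (inr (g (i, u)))].
  apply: leq_trans (@load_le_sum _ _ size sigma S _ _) _.
    by move=> jb /jobs_at [|[_]] ->; rewrite in_set2 eqxx ?orbT.
  by rewrite big_set2.
apply: leq_trans (@load_le_sum _ _ size sigma [set c] _ _) _.
  move=> jb /jobs_at [-> | [u_true _]]; first by rewrite in_set1.
  by rewrite u_true in u_lit.
by rewrite big_set1 -[size c]addn0.
Qed.

Lemma schedule_of_sat :
  exists sigma : Job n m -> Mach n m,
    valid_schedule (job_elig kappa) sigma /\ makespan size sigma <= 2.
Proof.
exists sigma; split; first exact: schedule_of_assignment_valid.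
apply/bigmax_leqP => -[[j q] | [i u]] _.
  exact: load_tmach_le.
exact: load_cmach_le.
Qed.

End FromAssignment.
End Reduction.

Theorem lemma8 (n m : nat) (cl : 'I_(2 * m) -> 'I_3 -> 'I_n * bool)
  (Hocc : forall l : 'I_n * bool,
      #|[set p : 'I_(2 * m) * 'I_3 | cl p.1 p.2 == l]| = 2)
  (kappa : 'I_n * 'I_4 -> 'I_(2 * m) * 'I_3)
  (Hbij : bijective kappa)
  (Hlit : forall (j : 'I_n) (t : 'I_4),
      cl (kappa (j, t)).1 (kappa (j, t)).2 = (j, val t < 2))
  (Hord : forall j : 'I_n,
      pos_lt (kappa (j, inord 0)) (kappa (j, inord 1)) /\
      pos_lt (kappa (j, inord 2)) (kappa (j, inord 3))) :
  (exists a : 'I_n -> bool, sat cl a) <->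
  (exists sigma : Job n m -> Mach n m,
      valid_schedule (job_elig kappa) sigma /\ makespan (@job_size n m) sigma <= 2).
Proof.
split=> [[a a_sat] | [sigma [sigma_valid sigma_makespan]]].
  exact: schedule_of_sat Hbij Hlit a a_sat.
exists (assignment_of_schedule sigma).
exact: sat_of_schedule Hbij Hlit sigma sigma_valid sigma_makespan.
Qed.
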